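(* Let $G$ be a compact matrix quantum group with polynomial growth with respect to a length function $\ell$. Then the fusion algebra $F(G)$ has the rapid decay property with respect to $\ell$: there exist $C>0$ and $s>0$ such that $\|\pi(f)\|\le C\Bigl(\sum_{\alpha\in\operatorname{Irred}(G)}|f(\alpha)|^2d(\alpha)^2(1+\ell(\alpha))^{2s}\Bigr)^{1/2}$ for every $f=\sum_\alpha f(\alpha)\alpha\in F(G)$.
   Context: $\operatorname{Irred}(G)$ is a complete set of representatives of irreducible unitary corepresentations of $G$, $d(\alpha)$ the dimension of $\alpha$, $e$ the trivial corepresentation. The fusion algebra $F(G)$ is the vector space with basis $\operatorname{Irred}(G)$ and product $\alpha\beta=\sum_\gamma N^\gamma_{\alpha,\beta}\gamma$ ($N^\gamma_{\alpha,\beta}$ = multiplicity of $\gamma$ in $\alpha\otimes\beta$). $\ell^2(\operatorname{Irred}(G))$ is its completion for the inner product making $\operatorname{Irred}(G)$ orthogonal with $\langle\alpha,\alpha\rangle=d(\alpha)^2$, and $\pi(f)$ is the bounded operator on it extending left multiplication by $f$; $\|\pi(f)\|$ is its operator norm. A length function $\ell:\operatorname{Irred}(G)\to[0,\infty)$ satisfies $\ell(e)=0$, $\ell(\bar\alpha)=\ell(\alpha)$, $\ell(\gamma)\le\ell(\alpha)+\ell(\beta)$ when $N^\gamma_{\alpha,\beta}\neq0$. Polynomial growth w.r.t. $\ell$: there exist $c,s>0$ with $\sum_{\ell(\alpha)\in(n-1,n]}d(\alpha)^2\le c\,n^s$ for all $n\in\mathbb{N}$. *)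

From HB Require Import structures.
From mathcomp Require Import all_boot all_order all_algebra.
From mathcomp Require Import all_classical all_reals all_analysis.
From mathcomp Require Import complex.
Set Implicit Arguments. Unset Strict Implicit. Unset Printing Implicit Defensive.
Import Order.TTheory GRing.Theory Num.Theory.
Local Open Scope ring_scope.

(* Abstract fusion-rule data of a compact (matrix) quantum group G:
   - [I]        : index type standing for Irred(G) (countable);
   - [e]        : the trivial corepresentation;
   - [bar]      : the conjugate corepresentation alpha |-> alpha-bar;
   - [N g a b]  : N^g_{a,b}, the multiplicity of g in a (x) b;
   - [supp a b] : a finite duplicate-free list containing every g with
                  N^g_{a,b} <> 0 (tensor products decompose into finitely
                  many irreducibles);
   - [d a]      : the (integer, positive) dimension of a.
   The axioms below are the standard properties of the fusion rules of a
   compact quantum group (Woronowicz): unit, conjugation, Frobenius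
   reciprocity, associativity of the tensor product, multiplicativity and
   conjugation-invariance of the dimension. *)
Record fusion_rules (I : countType) := FusionRules {
  fr_e : I;
  fr_bar : I -> I;
  fr_N : I -> I -> I -> nat;
  fr_supp : I -> I -> seq I;
  fr_d : I -> nat;
  fr_barK : involutive fr_bar;
  fr_bar_e : fr_bar fr_e = fr_e;
  fr_supp_uniq : forall a b, uniq (fr_supp a b);
  fr_suppP : forall g a b, fr_N g a b != 0%N -> g \in fr_supp a b;
  fr_unitl : forall g b, fr_N g fr_e b = (g == b) :> nat;
  fr_unitr : forall g a, fr_N g a fr_e = (g == a) :> nat;
  fr_frobl : forall g a b, fr_N g a b = fr_N b (fr_bar a) g;
  fr_frobr : forall g a b, fr_N g a b = fr_N a g (fr_bar b);
  fr_assoc : forall a b c x,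
    (\sum_(y <- fr_supp a b) fr_N y a b * fr_N x y c =
     \sum_(y <- fr_supp b c) fr_N y b c * fr_N x a y)%N;
  fr_d_gt0 : forall a, (0 < fr_d a)%N;
  fr_d_bar : forall a, fr_d (fr_bar a) = fr_d a;
  fr_dM : forall a b,
    (fr_d a * fr_d b = \sum_(g <- fr_supp a b) fr_N g a b * fr_d g)%N
}.

Section FusionDefs.
Variables (I : countType) (F : fusion_rules I) (R : realType).

Definition is_length_function (l : I -> R) : Prop :=
  [/\ forall a, 0 <= l a,
      l (fr_e F) = 0,
      forall a, l (fr_bar F a) = l a &
      forall a b g, fr_N F g a b != 0%N -> l g <= l a + l b].

(* alpha lies in the n-th shell  l(alpha) \in (n-1, n]  (n >= 1); the first
   shell also contains the elements of length 0. *)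
Definition in_shell (l : I -> R) (n : nat) (a : I) : bool :=
  ((n == 1%N) || ((n.-1)%:R < l a)) && (l a <= n%:R).

(* polynomial growth:  sum_{l(a) in (n-1,n]} d(a)^2 <= c n^s  for all n >= 1;
   the (possibly infinite) sum is bounded by bounding all its finite
   partial sums. *)
Definition polynomial_growth (l : I -> R) : Prop :=
  exists c s : R, 0 < c /\ 0 < s /\
    forall (n : nat) (A : seq I), (1 <= n)%N -> uniq A ->
      all (in_shell l n) A ->
      \sum_(a <- A) ((fr_d F a)%:R ^+ 2 : R) <= c * powR (n%:R) s.

Definition cnorm2 (z : R[i]) : R := complex.Re z ^+ 2 + complex.Im z ^+ 2.

(* For f = sum_{a in sf} f(a) a and g = sum_{b in sg} g(b) b in F(G),
   the coefficient of gamma in the fusion product f g. *)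
Definition fusion_mul_coef (sf sg : seq I) (f g : I -> R[i]) (c : I) : R[i] :=
  \sum_(a <- sf) \sum_(b <- sg) (f a * g b) *+ fr_N F c a b.

(* squared l^2(Irred(G)) norm of a finitely supported element:
   <alpha, alpha> = d(alpha)^2, Irred(G) orthogonal. *)
Definition l2norm2 (s : seq I) (f : I -> R[i]) : R :=
  \sum_(a <- s) cnorm2 (f a) * (fr_d F a)%:R ^+ 2.

Definition rd_norm2 (l : I -> R) (s : R) (sf : seq I) (f : I -> R[i]) : R :=
  \sum_(a <- sf) cnorm2 (f a) * (fr_d F a)%:R ^+ 2 * powR (1 + l a) (2 * s).

End FusionDefs.

From HB Require Import structures.
From mathcomp Require Import all_boot all_order all_algebra.
From mathcomp Require Import all_classical all_reals all_analysis.
From mathcomp Require Import complex.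
From mathcomp Require Import ring lra.
Import Order.TTheory GRing.Theory Num.Theory.
Local Open Scope ring_scope.

(* Expand (f g)(x) = sum_{a,b} N^x_{ab} f(a) g(b) and apply Cauchy-Schwarz
   with the weights w(a,b) = d(a) (1 + l(a))^(2s) d(b). Since d(x) <= d(a) d(b)
   whenever N^x_{ab} <> 0 and, by Frobenius reciprocity,
   sum_b N^x_{ab} d(b) <= d(a) d(x), the dual sum sum_{a,b} N^x_{ab} / w(a,b)
   is at most K / d(x), where K = sum_a d(a)^2 / (1 + l(a))^(2s). Summing over
   x with sum_x N^x_{ab} d(x) <= d(a) d(b) yields
   ||f g||^2 <= K ||f||_rd^2 ||g||^2. Grouping Irred(G) into the shells
   n - 1 < l <= n, polynomial growth gives K <= c sum_n n^s0 / n^(s0+2) <= 2c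
   once 2s = s0 + 2. *)

Lemma weighted_cauchy_schwarz (R : realFieldType) (T : Type) (s : seq T)
    (c w t : T -> R) :
  (forall i, 0 <= c i) -> (forall i, 0 < w i) ->
  (\sum_(i <- s) c i * t i) ^+ 2 <=
  (\sum_(i <- s) c i * w i * t i ^+ 2) * (\sum_(i <- s) c i / w i).
Proof.
move=> c_ge0 w_gt0; rewrite expr2 !mulr_suml.
under eq_bigr do rewrite mulr_sumr.
under [X in _ <= X]eq_bigr do rewrite mulr_sumr.
set A := (X in _ <= X).
suff: 2 * (\sum_(i <- s) \sum_(j <- s) c i * t i * (c j * t j)) <= A + A by lra.
have {2}-> : A = \sum_(i <- s) \sum_(j <- s) c j * w j * t j ^+ 2 * (c i / w i).
  by rewrite /A exchange_big.
rewrite /A -big_split /= mulr_sumr.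
apply: ler_sum => i _; rewrite -big_split /= mulr_sumr.
apply: ler_sum => j _; rewrite -subr_ge0.
have wi := w_gt0 i; have wj := w_gt0 j.
have -> : c i * w i * t i ^+ 2 * (c j / w j) + c j * w j * t j ^+ 2 * (c i / w i)
    - 2 * (c i * t i * (c j * t j)) =
    c i * c j * (w i * t i - w j * t j) ^+ 2 / (w i * w j).
  by field; rewrite !gt_eqF.
apply: divr_ge0; last exact: ltW (mulr_gt0 wi wj).
by rewrite mulr_ge0 ?sqr_ge0 ?mulr_ge0.
Qed.

Section ComplexModulus.
Variable R : realType.

Lemma cnorm2_ge0 (z : R[i]) : 0 <= cnorm2 z.
Proof. by rewrite addr_ge0 ?sqr_ge0. Qed.

Lemma cnorm2M (x y : R[i]) : cnorm2 (x * y) = cnorm2 x * cnorm2 y.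
Proof. by case: x => a b; case: y => c d; rewrite /cnorm2 /=; ring. Qed.

Lemma cnorm2_sumMn_le (T : Type) (s : seq T) (c : T -> nat) (w : T -> R)
    (z : T -> R[i]) :
  (forall i, 0 < w i) ->
  cnorm2 (\sum_(i <- s) z i *+ c i) <=
  (\sum_(i <- s) (c i)%:R * w i * cnorm2 (z i)) * (\sum_(i <- s) (c i)%:R / w i).
Proof.
move=> w_gt0.
have sumE (p : {additive Rcomplex R -> R}) :
    p (\sum_(i <- s) z i *+ c i) = \sum_(i <- s) (c i)%:R * p (z i).
  by rewrite raddf_sum; apply: eq_bigr => i _; rewrite raddfMn mulr_natl.
have c_ge0 i : 0 <= (c i)%:R :> R by [].
rewrite /cnorm2 (sumE (@complex.Re R)) (sumE (@complex.Im R)).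
have CS t := @weighted_cauchy_schwarz _ _ s _ _ t c_ge0 w_gt0.
apply: le_trans (lerD (CS (fun i => complex.Re (z i)))
                      (CS (fun i => complex.Im (z i)))) _.
by rewrite -mulrDl -big_split /=; under eq_bigr do rewrite -mulrDr.
Qed.

End ComplexModulus.

Lemma leq_sum_supp (T : eqType) (s t : seq T) (G : T -> nat) :
  uniq s -> uniq t -> (forall i, G i != 0%N -> i \in t) ->
  (\sum_(i <- s) G i <= \sum_(i <- t) G i)%N.
Proof.
move=> s_uniq t_uniq G_supp.
rewrite (bigID (fun i => G i != 0%N)) /= [X in (_ + X)%N]big1; last first.
  by move=> i /negPn/eqP.
rewrite addn0 -big_filter.
apply: (uniq_sub_le_big leqnn (fun x y => leq_addr y x)) => //.
  exact: filter_uniq.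
by move=> i; rewrite mem_filter => /andP[/G_supp].
Qed.

Section FusionDimensions.
Variables (I : countType) (F : fusion_rules I).
Local Notation N := (fr_N F).
Local Notation d := (fr_d F).

Lemma fr_d_le_mul (a b x : I) : N x a b != 0%N -> (d x <= d a * d b)%N.
Proof.
move=> Nx_neq0; rewrite fr_dM (bigD1_seq x) ?fr_suppP ?fr_supp_uniq //=.
by rewrite (leq_trans _ (leq_addr _ _)) // leq_pmull // lt0n.
Qed.

Lemma sum_fr_N_dim_le (a b : I) (sc : seq I) : uniq sc ->
  (\sum_(x <- sc) N x a b * d x <= d a * d b)%N.
Proof.
move=> sc_uniq; rewrite fr_dM leq_sum_supp ?fr_supp_uniq // => x.
by rewrite muln_eq0 negb_or => /andP[/fr_suppP].
Qed.

Lemma sum_fr_N_dim_right_le (a x : I) (sg : seq I) : uniq sg ->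
  (\sum_(b <- sg) N x a b * d b <= d a * d x)%N.
Proof.
move=> sg_uniq; under eq_bigr do rewrite fr_frobl.
rewrite -(fr_d_bar F a) fr_dM leq_sum_supp ?fr_supp_uniq // => b.
by rewrite muln_eq0 negb_or => /andP[/fr_suppP].
Qed.

End FusionDimensions.

Section FusionProduct.
Variables (I : countType) (F : fusion_rules I) (R : realType).
Local Notation N := (fr_N F).
Local Notation D a := ((fr_d F a)%:R : R).

Lemma dim_gt0 (a : I) : 0 < D a.
Proof. by rewrite ltr0n fr_d_gt0. Qed.

Lemma sum_fr_N_div_dim_le (a x : I) (sg : seq I) : uniq sg ->
  \sum_(b <- sg) (N x a b)%:R / D b <= D a ^+ 3 / D x.
Proof.
move=> sg_uniq; have Da := dim_gt0 a; have Dx := dim_gt0 x.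
apply: (@le_trans _ _ (\sum_(b <- sg) (N x a b)%:R * D b * (D a / D x) ^+ 2)).
  apply: ler_sum => b _; have Db := dim_gt0 b.
  have [->|Nx_neq0] := eqVneq (N x a b) 0%N; first by rewrite !mul0r.
  have Dx_le : D x ^+ 2 <= (D a * D b) ^+ 2.
    by rewrite -natrM -!natrX ler_nat leq_exp2r // fr_d_le_mul.
  rewrite -subr_ge0.
  have -> : (N x a b)%:R * D b * (D a / D x) ^+ 2 - (N x a b)%:R / D b =
      (N x a b)%:R * ((D a * D b) ^+ 2 - D x ^+ 2) / (D b * D x ^+ 2).
    by field; rewrite !gt_eqF.
  apply: divr_ge0; last by rewrite mulr_ge0 ?sqr_ge0 ?ltW.
  by rewrite mulr_ge0 // subr_ge0.
rewrite -mulr_suml.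
have -> : D a ^+ 3 / D x = D a * D x * (D a / D x) ^+ 2 by field; rewrite gt_eqF.
rewrite ler_wpM2r ?sqr_ge0 //.
under eq_bigr do rewrite -natrM.
by rewrite -natr_sum -natrM ler_nat sum_fr_N_dim_right_le.
Qed.

Variables (P : I -> R) (K : R) (sf sg : seq I) (f g : I -> R[i]).
Hypothesis P_gt0 : forall a, 0 < P a.
Hypothesis sg_uniq : uniq sg.
Hypothesis K_ge : \sum_(a <- sf) D a ^+ 2 / P a <= K.

Local Notation w a b := (D a * P a * D b).

Lemma sum_fr_N_div_weight_le (x : I) :
  \sum_(a <- sf) \sum_(b <- sg) (N x a b)%:R / w a b <= K / D x.
Proof.
have Dx := dim_gt0 x; have Dx_inv : 0 <= (D x)^-1 by rewrite invr_ge0 ltW.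
apply: (le_trans _ (ler_wpM2r Dx_inv K_ge)); rewrite mulr_suml.
apply: ler_sum => a _; have Da := dim_gt0 a; have Pa := P_gt0 a.
have -> : \sum_(b <- sg) (N x a b)%:R / w a b =
    (D a * P a)^-1 * \sum_(b <- sg) (N x a b)%:R / D b.
  rewrite mulr_sumr; apply: eq_bigr => b _; have Db := dim_gt0 b.
  by field; rewrite !gt_eqF.
have -> : D a ^+ 2 / P a * (D x)^-1 = (D a * P a)^-1 * (D a ^+ 3 / D x).
  by field; rewrite !gt_eqF.
by rewrite ler_wpM2l ?sum_fr_N_div_dim_le // invr_ge0 ltW ?mulr_gt0.
Qed.

Lemma cnorm2_fusion_mul_coef_le (x : I) :
  cnorm2 (fusion_mul_coef F sf sg f g x) * D x <=
  K * \sum_(a <- sf) \sum_(b <- sg) (N x a b)%:R * w a b * cnorm2 (f a * g b).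
Proof.
have w_gt0 (p : I * I) : 0 < w p.1 p.2 by rewrite !mulr_gt0 ?dim_gt0.
have := @cnorm2_sumMn_le R _ [seq (a, b) | a <- sf, b <- sg]
  (fun p => N x p.1 p.2) _ (fun p => f p.1 * g p.2) w_gt0.
rewrite !big_allpairs /fusion_mul_coef /= => CS.
rewrite -ler_pdivlMr ?dim_gt0 // mulrAC [X in _ <= X]mulrC.
apply: le_trans CS _; rewrite ler_wpM2l //.
  apply: sumr_ge0 => a _; apply: sumr_ge0 => b _.
  by rewrite mulr_ge0 ?cnorm2_ge0 // mulr_ge0 // ltW // (w_gt0 (a, b)).
exact: sum_fr_N_div_weight_le.
Qed.

Lemma l2norm2_fusion_mul_le (sc : seq I) : uniq sc ->
  l2norm2 F sc (fusion_mul_coef F sf sg f g) <=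
  K * (\sum_(a <- sf) cnorm2 (f a) * D a ^+ 2 * P a) * l2norm2 F sg g.
Proof.
move=> sc_uniq.
have K_ge0 : 0 <= K.
  apply: le_trans K_ge; apply: sumr_ge0 => a _.
  by rewrite mulr_ge0 ?sqr_ge0 // invr_ge0 ltW.
pose S a b := w a b * cnorm2 (f a * g b).
have S_ge0 a b : 0 <= S a b.
  by rewrite mulr_ge0 ?cnorm2_ge0 // ltW // !mulr_gt0 ?dim_gt0.
apply: (@le_trans _ _
    (K * \sum_(a <- sf) \sum_(b <- sg) S a b * \sum_(x <- sc) (N x a b)%:R * D x)).
  have -> : K * \sum_(a <- sf) \sum_(b <- sg) S a b * \sum_(x <- sc) (N x a b)%:R * D x
      = \sum_(x <- sc) K * (\sum_(a <- sf) \sum_(b <- sg) (N x a b)%:R * S a b) * D x.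
    under [RHS]eq_bigr do rewrite -mulrA.
    rewrite -mulr_sumr; congr (K * _).
    under [RHS]eq_bigr do rewrite mulr_suml.
    rewrite [RHS]exchange_big; apply: eq_bigr => a _.
    under [RHS]eq_bigr do rewrite mulr_suml.
    rewrite [RHS]exchange_big; apply: eq_bigr => b _.
    by rewrite mulr_sumr; apply: eq_bigr => x _; ring.
  apply: ler_sum => x _; rewrite expr2 mulrA ler_pM2r ?dim_gt0 //.
  apply: le_trans (cnorm2_fusion_mul_coef_le x) _.
  by under [X in _ <= K * X]eq_bigr do under eq_bigr do rewrite mulrA.
rewrite -mulrA ler_wpM2l //.
have -> : (\sum_(a <- sf) cnorm2 (f a) * D a ^+ 2 * P a) * l2norm2 F sg g =
    \sum_(a <- sf) \sum_(b <- sg) S a b * (D a * D b).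
  rewrite /l2norm2 mulr_suml; apply: eq_bigr => a _.
  by rewrite mulr_sumr; apply: eq_bigr => b _; rewrite /S cnorm2M; ring.
apply: ler_sum => a _; apply: ler_sum => b _.
rewrite ler_wpM2l //; under eq_bigr do rewrite -natrM.
by rewrite -natr_sum -natrM ler_nat sum_fr_N_dim_le.
Qed.

End FusionProduct.

Lemma sum_inv_sqr_le (R : realFieldType) (n : nat) :
  \sum_(m < n) ((m.+1)%:R ^+ 2 : R)^-1 <= 2 - 2 / n.+1%:R.
Proof.
elim: n => [|n IHn]; first by rewrite big_ord0 divr1 subrr.
rewrite big_ord_recr /=; apply: le_trans (lerD IHn (lexx _)) _.
set x : R := n.+1%:R; have -> : n.+2%:R = x + 1 :> R by rewrite natr1.
have x_ge1 : 1 <= x by rewrite ler1n.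
rewrite -subr_ge0.
have -> : 2 - 2 / (x + 1) - (2 - 2 / x + (x ^+ 2)^-1) = (x - 1) / (x ^+ 2 * (x + 1)).
  by field; rewrite !gt_eqF //; lra.
by apply: divr_ge0; rewrite ?subr_ge0 // mulr_ge0 ?sqr_ge0 //; lra.
Qed.

Section ShellIndex.
Context {R : archiFieldType}.

Lemma shell_index_subproof (x : R) : exists m : nat, x <= m.+1%:R.
Proof. by exists (Num.truncn x); apply: ltW (truncnS_gt x). Qed.

(* The n-th shell (n - 1, n] of a length x >= 0 is the one with
   n = (shell_index x).+1; the first shell also receives x = 0. *)
Definition shell_index (x : R) : nat := ex_minn (shell_index_subproof x).

Lemma shell_indexP (x : R) :
  x <= (shell_index x).+1%:R /\ ((shell_index x == 0)%N || ((shell_index x)%:R < x)).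
Proof.
rewrite /shell_index; case: ex_minnP => [[|m]] // x_le m_min; split => //=.
by rewrite ltNge; apply/negP => /m_min; rewrite ltnn.
Qed.

Lemma shell_index_le (x : R) : 0 <= x -> (shell_index x).+1%:R <= 1 + x.
Proof.
move=> x_ge0; have [_ /orP[/eqP ->|lt_x]] := shell_indexP x; first by lra.
by rewrite -nat1r; lra.
Qed.

End ShellIndex.

Section Shells.
Variables (I : countType) (F : fusion_rules I) (R : realType).
Variables (l : I -> R) (c s0 : R).
Hypothesis l_ge0 : forall a, 0 <= l a.
Hypothesis s0_ge0 : 0 <= s0.
Hypothesis growth : forall (n : nat) (A : seq I), (1 <= n)%N -> uniq A ->
  all (in_shell l n) A -> \sum_(a <- A) ((fr_d F a)%:R ^+ 2 : R) <= c * powR n%:R s0.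
Local Notation D a := ((fr_d F a)%:R : R).
Local Notation m a := (shell_index (l a)).

Lemma growth_const_ge0 : 0 <= c.
Proof. by have := growth 1 [::] (leqnn 1) isT isT; rewrite big_nil powR1 mulr1. Qed.

Lemma in_shell_index (a : I) : in_shell l (m a).+1 a.
Proof. by have [le_l lt_l] := shell_indexP (l a); rewrite /in_shell le_l andbT. Qed.

Lemma sum_shell_le (sf : seq I) (k : nat) : uniq sf ->
  \sum_(a <- sf | m a == k) D a ^+ 2 <= c * powR k.+1%:R s0.
Proof.
move=> sf_uniq; rewrite -big_filter; apply: growth; rewrite ?filter_uniq //.
by apply/allP => a; rewrite mem_filter => /andP[/eqP <- _]; apply: in_shell_index.
Qed.

Lemma sum_sqr_dim_div_powR_le (sf : seq I) : uniq sf ->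
  \sum_(a <- sf) D a ^+ 2 / (1 + l a) `^ (s0 + 2) <= 2 * c.
Proof.
move=> sf_uniq.
pose G (k : nat) : R := (k.+1%:R `^ (s0 + 2))^-1.
have G_ge0 k : 0 <= G k by rewrite invr_ge0 powR_ge0.
have GE k : G k * powR k.+1%:R s0 = (k.+1%:R ^+ 2)^-1.
  rewrite /G powRD ?pnatr_eq0 ?implybT // powR_mulrn //.
  by rewrite invfM mulrAC mulVf ?mul1r // gt_eqF // powR_gt0 // ltr0Sn.
apply: (@le_trans _ _ (\sum_(a <- sf) G (m a) * D a ^+ 2)).
  apply: ler_sum => a _; rewrite mulrC; apply: ler_wpM2r; first exact: sqr_ge0.
  have l1_gt0 : 0 < 1 + l a by have := l_ge0 a; lra.
  rewrite lef_pV2 ?posrE ?powR_gt0 ?ltr0Sn //.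
  by apply: ge0_ler_powR; rewrite ?nnegrE ?shell_index_le ?addr_ge0 // ltW.
pose M := (\max_(a <- sf) m a)%N.
rewrite (partition_big (fun a => inord (m a) : 'I_M.+1) xpredT) //=.
apply: (@le_trans _ _ (\sum_(k < M.+1) c * (k.+1%:R ^+ 2)^-1)).
  apply: ler_sum => k _.
  have -> : \sum_(a <- sf | inord (m a) == k) G (m a) * D a ^+ 2 =
      G k * \sum_(a <- sf | m a == k) D a ^+ 2.
    rewrite mulr_sumr big_seq_cond (eq_bigl (fun a => (a \in sf) && (m a == k))).
      by rewrite -big_seq_cond; apply: eq_bigr => a /eqP ->.
    move=> a; case: (boolP (a \in sf)) => //= a_sf.
    by rewrite -val_eqE /= inordK // ltnS (leq_bigmax_seq (F := fun a => m a)).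
  by rewrite -GE mulrCA ler_wpM2l // sum_shell_le.
rewrite -mulr_sumr mulrC ler_wpM2r ?growth_const_ge0 //.
apply: le_trans (sum_inv_sqr_le _ M.+1) _.
by rewrite gerBl divr_ge0.
Qed.

End Shells.

Theorem proposition3p6 (I : countType) (F : fusion_rules I) (R : realType)
    (l : I -> R) :
  is_length_function F l -> polynomial_growth F l ->
  exists C s : R, 0 < C /\ 0 < s /\
    forall (sf sg sc : seq I) (f g : I -> R[i]),
      uniq sf -> uniq sg -> uniq sc ->
      Num.sqrt (l2norm2 F sc (fusion_mul_coef F sf sg f g))
        <= C * Num.sqrt (rd_norm2 F l s sf f) * Num.sqrt (l2norm2 F sg g).
Proof.
move=> [l_ge0 _ _ _] [c [s0 [c_gt0 [s0_gt0 growth]]]].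
have s_gt0 : 0 < s0 / 2 + 1 by rewrite ltr_wpDl ?divr_ge0 ?ltW.
exists (Num.sqrt (2 * c)), (s0 / 2 + 1); split; first by rewrite sqrtr_gt0; lra.
split=> // sf sg sc f g sf_uniq sg_uniq sc_uniq.
have P_gt0 a : 0 < (1 + l a) `^ (2 * (s0 / 2 + 1)).
  by apply: powR_gt0; have := l_ge0 a; lra.
have rd_ge0 : 0 <= rd_norm2 F l (s0 / 2 + 1) sf f.
  by apply: sumr_ge0 => a _; rewrite !mulr_ge0 ?cnorm2_ge0 ?sqr_ge0 ?powR_ge0.
have c2_ge0 : 0 <= 2 * c by lra.
rewrite -sqrtrM // -(sqrtrM _ (mulr_ge0 c2_ge0 rd_ge0)); apply: ler_wsqrtr.
apply: l2norm2_fusion_mul_le => //.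
rewrite (_ : 2 * (s0 / 2 + 1) = s0 + 2); last by field.
exact: sum_sqr_dim_div_powR_le l_ge0 (ltW s0_gt0) growth _ sf_uniq.
Qed.
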